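(* Let $$A=\begin{bmatrix}1&1&1&1\\1&1&1&1\\1&0&0&0\end{bmatrix}.$$ For every integer $k\geq 1$ there exists an integer $m\leq 64k+1$ such that $$\mathrm{forb}(m,A)\geq \frac53\binom{m}{2}+\binom{m}{1}+\binom{m}{0}+k.$$
   Context: A simple $0$-$1$ matrix is one with no repeated columns; an $m\times n$ simple $0$-$1$ matrix is identified with a family of $n$ distinct subsets of $[m]$ (rows index elements, columns index sets). A matrix $M$ has configuration $F$ if some submatrix of $M$ is a row and column permutation of $F$. $\mathrm{forb}(m,F)$ denotes the maximum number of columns of an $m$-rowed simple $0$-$1$ matrix that does not have configuration $F$. A triple system of order $m$ and multiplicity $\lambda$ is a family of $3$-element subsets (blocks) of an $m$-element set in which every pair of distinct elements lies in exactly $\lambda$ blocks. *)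

From HB Require Import structures.
From mathcomp Require Import all_boot all_order all_algebra.
Set Implicit Arguments. Unset Strict Implicit. Unset Printing Implicit Defensive.

(* A simple m-rowed 0-1 matrix = a family of distinct subsets of [m] = 'I_m
   (rows = elements, columns = sets).
   [has_config F S]: some submatrix of S is a row and column permutation of
   the p x q 0-1 matrix F, i.e. there are p distinct rows r and q distinct
   columns c of S with F i j = (r i \in c j). *)
Definition has_config (p q m : nat) (F : 'M[bool]_(p, q)) (S : {set {set 'I_m}}) : bool :=
  [exists r : {ffun 'I_p -> 'I_m}, exists c : {ffun 'I_q -> {set 'I_m}},
    [&& injectiveb r, injectiveb c, [forall j, c j \in S]
      & [forall i, forall j, F i j == (r i \in c j)]]].

Definition forb (p q : nat) (m : nat) (F : 'M[bool]_(p, q)) : nat :=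
  \max_(S : {set {set 'I_m}} | ~~ has_config F S) #|S|.

(* A = [1 1 1 1; 1 1 1 1; 1 0 0 0] *)
Definition A_mat : 'M[bool]_(3, 4) :=
  \matrix_(i < 3, j < 4) ((nat_of_ord i != 2%N) || (nat_of_ord j == 0%N)).

From HB Require Import structures.
From mathcomp Require Import all_boot all_order all_algebra all_field.
From mathcomp Require Import zify lra.
Set Implicit Arguments. Unset Strict Implicit. Unset Printing Implicit Defensive.
Import Order.TTheory GRing.Theory Num.Theory.

(* A family F avoids the configuration A exactly when no member X of F
   contains three distinct points a, b, c that are "separated" (a, b in,
   c out) by three distinct members of F; we call such families A-free and
   show that an A-free family on any finite ground set V yields the bound
   #|F| <= forb #|V| A.

   The construction lives in a linear space whose lines all have 4 points:
   the family of all sets of size at most 2 together with all subsets of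
   size at least 3 of lines is A-free, since a triple a, b, c inside a line L
   is separated only by [set a; b] and L :\ c.  It has
   C(m,0) + C(m,1) + C(m,2) + 5 #lines members, and double counting point
   pairs gives 12 #lines = m (m - 1).  The affine space AG(t, 4) (row
   vectors over a field with 4 elements) is such a linear space with
   m = 4^t points; choosing t minimal with m (m - 1) >= 12 k yields the
   theorem. *)

Definition separators (V : finType) (F : {set {set V}}) (a b c : V) : {set {set V}} :=
  [set Y in F | [&& a \in Y, b \in Y & c \notin Y]].

Definition A_free (V : finType) (F : {set {set V}}) : Prop :=
  forall (X : {set V}) (a b c : V), X \in F -> a \in X -> b \in X -> c \in X ->
    [&& a != b, a != c & b != c] -> #|separators F a b c| <= 2.

(* An occurrence of A provides a triple (rows 0, 1, 2) inside column 0 with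
   the three further columns as separators. *)
Lemma config_not_A_free m (S : {set {set 'I_m}}) : has_config A_mat S -> ~ A_free S.
Proof.
case/existsP => r /existsP [c /and4P [/injectiveP r_inj /injectiveP c_inj /forallP cS /forallP rc]].
have in_c i j : (r i \in c j) = (i != 2 :> nat) || (j == 0 :> nat).
  by move/forallP: (rc i) => /(_ j) /eqP <-; rewrite mxE.
have r_neq i i' : i != i' -> r i != r i' by apply: contra => /eqP /r_inj ->.
pose i1 : 'I_3 := inord 1; pose i2 : 'I_3 := inord 2; pose j0 : 'I_4 := ord0.
move=> freeS; have := freeS (c j0) (r ord0) (r i1) (r i2) (cS j0).
rewrite !in_c !inordK //= !r_neq -?val_eqE /= ?inordK // => /(_ isT isT isT isT).
have card_c : #|c @: [set~ j0]| = 3 by rewrite card_imset ?cardsC1 ?card_ord.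
apply/negP; rewrite -ltnNge; apply: (@leq_trans #|c @: [set~ j0]|); first by rewrite card_c.
apply/subset_leq_card/subsetP => _ /imsetP [j jn0 ->].
by rewrite inE cS !in_c !inordK //=; move: jn0; rewrite !inE.
Qed.

Lemma A_free_le_forb m (S : {set {set 'I_m}}) : A_free S -> #|S| <= forb m A_mat.
Proof.
move=> freeS; apply: (leq_bigmax_cond (P := fun S0 => ~~ has_config A_mat S0)).
by apply/negP => /config_not_A_free.
Qed.

Lemma separators_imset (V W : finType) (f : V -> W) (F : {set {set V}}) (a b c : V) :
  injective f ->
  separators [set f @: Y | Y : {set V} in F] (f a) (f b) (f c) =
  [set f @: Y | Y : {set V} in separators F a b c].
Proof.
move=> f_inj; apply/setP => Z; apply/idP/imsetP => [|[Y + ->]].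
  rewrite inE => /andP [/imsetP [Y YF ->]]; rewrite !mem_imset // => sepY.
  by exists Y; rewrite // inE YF.
by rewrite !inE (mem_imset _ _ (imset_inj f_inj)) !(mem_imset _ _ f_inj).
Qed.

Lemma A_free_imset (V W : finType) (f : V -> W) (F : {set {set V}}) :
  injective f -> A_free F -> A_free [set f @: Y | Y : {set V} in F].
Proof.
move=> f_inj freeF _ _ _ _ /imsetP [X XF ->] /imsetP [a aX ->] /imsetP [b bX ->] /imsetP [c cX ->].
rewrite !(inj_eq f_inj) => abc; rewrite separators_imset // card_imset; last exact: imset_inj.
exact: freeF XF aX bX cX abc.
Qed.

Lemma A_free_le_forb_card (V : finType) (F : {set {set V}}) :
  A_free F -> #|F| <= forb #|V| A_mat.
Proof.
move=> freeF; have rank_inj : injective (@enum_rank V) by exact: enum_rank_inj.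
rewrite -(card_imset _ (imset_inj rank_inj)).
exact/A_free_le_forb/A_free_imset.
Qed.

Lemma card_distinct_pairs (T : finType) (A : {set T}) :
  #|[set pq : T * T | [&& pq.1 \in A, pq.2 \in A & pq.1 != pq.2]]| = #|A| * #|A|.-1.
Proof.
pose diag := [set pq : T * T | pq.1 == pq.2].
have card_diag : #|setX A A :&: diag| = #|A|.
  suff -> : setX A A :&: diag = (fun x => (x, x)) @: A by rewrite card_imset // => x y [].
  apply/setP => -[x y]; rewrite !inE /=; apply/idP/imsetP => [|[z zA [-> ->]]].
    by case/andP => /andP [xA _] /eqP <-; exists x.
  by rewrite zA eqxx.
have := cardsID diag (setX A A); rewrite card_diag cardsX.
have -> : setX A A :\: diag = [set pq : T * T | [&& pq.1 \in A, pq.2 \in A & pq.1 != pq.2]].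
  by apply/setP => pq; rewrite !inE andbC andbA.
case: #|A| => [|n]; first by rewrite add0n.
by rewrite mulnS => /addnI.
Qed.

(* A 4-set has C(4,3) + C(4,4) = 5 subsets of size at least 3. *)
Lemma card_large_subsets (T : finType) (L : {set T}) :
  #|L| = 4 -> #|[set Y : {set T} | Y \subset L & 2 < #|Y|]| = 5.
Proof.
move=> L4; pose draws n := [set Y : {set T} | Y \subset L & #|Y| == n].
have -> : [set Y : {set T} | Y \subset L & 2 < #|Y|] = draws 3 :|: draws 4.
  apply/setP => Y; rewrite !inE; case YL: (Y \subset L) => //=.
  by move: (subset_leq_card YL); rewrite L4; case: #|Y| => [|[|[|[|[|n]]]]].
rewrite cardsU; suff -> : draws 3 :&: draws 4 = set0 by rewrite !cards_draws L4 cards0.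
by apply/setP => Y; rewrite !inE andbACA andbb; case: (_ \subset _); case: #|Y| => [|[|[|[|n]]]].
Qed.

Section LinearSpace.
Variables (V : finType) (lines : {set {set V}}).
Hypothesis line_uniq : forall (L L' : {set V}) (a b : V), L \in lines -> L' \in lines ->
  a \in L -> b \in L -> a \in L' -> b \in L' -> a != b -> L = L'.

Definition line_of (Y : {set V}) : {set V} := odflt set0 [pick L in lines | Y \subset L].

Lemma line_ofE (Y L : {set V}) : L \in lines -> Y \subset L -> 1 < #|Y| -> line_of Y = L.
Proof.
move=> Lline YL /card_gt1P [a [b [aY bY ab]]]; rewrite /line_of.
case: pickP => [L' /andP [L'line YL']|/(_ L)]; last by rewrite Lline YL.
exact: line_uniq L'line Lline (subsetP YL' a aY) (subsetP YL' b bY)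
  (subsetP YL a aY) (subsetP YL b bY) ab.
Qed.

Lemma line_of_in (Y L : {set V}) : L \in lines -> Y \subset L -> line_of Y \in lines.
Proof.
by move=> Lline YL; rewrite /line_of; case: pickP => [L' /andP [] //|/(_ L)]; rewrite Lline YL.
Qed.

(* Double counting of ordered pairs of distinct points, grouped by the line
   through them, when every pair is on a line and all lines have s points. *)
Section PairCount.
Variable s : nat.
Hypothesis line_card : forall L, L \in lines -> #|L| = s.
Hypothesis line_through : forall a b : V, a != b -> exists2 L, L \in lines & [set a; b] \subset L.

Lemma card_lines : #|lines| * (s * s.-1) = #|V| * #|V|.-1.
Proof.
rewrite -cardsT -card_distinct_pairs; apply/esym; rewrite -sum1_card.
rewrite (partition_big (fun pq => line_of [set pq.1; pq.2]) (mem lines)) /=; last first.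
  by case=> a b; rewrite inE /= => /and3P [_ _ /line_through [L Lline abL]]; apply: line_of_in abL.
rewrite -sum_nat_const; apply: eq_bigr => L Lline.
rewrite -(line_card Lline) -card_distinct_pairs -sum1_card; apply: eq_bigl => -[a b] /=.
rewrite !inE /=; apply/andP/and3P => [[ab /eqP <-]|[aL bL ab]].
  have [L' L'line abL'] := line_through ab.
  rewrite (line_ofE L'line abL') ?cards2 ?ab //.
  by move: abL'; rewrite subUset !sub1set => /andP [-> ->].
have abL : [set a; b] \subset L by rewrite subUset !sub1set aL bL.
by rewrite ab (line_ofE Lline abL) ?cards2 ?ab.
Qed.
End PairCount.

Definition sublines : {set {set V}} :=
  [set Y : {set V} | (2 < #|Y|) && [exists L in lines, Y \subset L]].

Definition family : {set {set V}} := [set Y : {set V} | #|Y| <= 2] :|: sublines.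

Lemma card_family :
  #|family| = 'C(#|V|, 0) + 'C(#|V|, 1) + 'C(#|V|, 2) + #|sublines|.
Proof.
have card_disjU (B C : {set {set V}}) : [disjoint B & C] -> #|B :|: C| = #|B| + #|C|.
  by move=> dBC; rewrite cardsU (disjoint_setI0 dBC) cards0 subn0.
have small : [set Y : {set V} | #|Y| <= 2] =
    [set Y : {set V} | #|Y| == 0] :|: [set Y : {set V} | #|Y| == 1] :|: [set Y : {set V} | #|Y| == 2].
  by apply/setP => Y; rewrite !inE; case: #|Y| => [|[|[|n]]].
rewrite /family card_disjU; last first.
  by rewrite disjoints_subset; apply/subsetP => Y; rewrite !inE ltnNge => ->.
rewrite small !card_disjU ?card_draws //; rewrite disjoints_subset; apply/subsetP => Y.
all: by rewrite !inE; try case/orP; move=> /eqP ->.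
Qed.

Section FourPointLines.
Hypothesis line_card4 : forall L, L \in lines -> #|L| = 4.

(* A triple a, b, c inside a member X (hence inside the line L containing X)
   is separated only by [set a; b] and by L :\ c. *)
Lemma family_A_free : A_free family.
Proof.
move=> X a b c XF aX bX cX /and3P [ab ac bc].
have X_large : 2 < #|X|.
  apply: leq_trans (subset_leq_card (_ : c |: [set a; b] \subset X)).
    by rewrite cardsU1 cards2 !inE negb_or ab !(eq_sym c) ac bc.
  by rewrite !subUset !sub1set aX bX cX.
have [L Lline XL] : exists2 L, L \in lines & X \subset L.
  by move: XF; rewrite !inE leqNgt X_large /= => /existsP [L /andP [? ?]]; exists L.
apply: (@leq_trans #|[set [set a; b]; L :\ c]|); last by rewrite cards2 ltnS leq_b1.
apply/subset_leq_card/subsetP => Y; rewrite !inE => /andP [+ /and3P [aY bY cY]].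
case/orP => [Y2|/andP [Y3 /existsP [L' /andP [L'line YL']]]].
  apply/orP; left; apply/eqP/esym/eqP; rewrite eqEcard cards2 ab Y2 andbT.
  by rewrite subUset !sub1set aY bY.
have E : L' = L.
  exact: line_uniq L'line Lline (subsetP YL' a aY) (subsetP YL' b bY)
    (subsetP XL a aX) (subsetP XL b bX) ab.
subst L'; apply/orP; right; rewrite eqEcard; apply/andP; split.
  by apply/subsetP => x xY; rewrite !inE (subsetP YL' _ xY) andbT; apply: contraNneq cY => <-.
by have := cardsD1 c L; rewrite (subsetP XL _ cX) (line_card4 Lline) add1n => -[<-].
Qed.

(* Each subline lies in exactly one line, which has 5 sublines. *)
Lemma card_sublines : #|sublines| = #|lines| * 5.
Proof.
rewrite -sum1_card (partition_big line_of (mem lines)) /=; last first.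
  by move=> Y; rewrite inE => /andP [_ /existsP [L /andP [Lline YL]]]; apply: line_of_in YL.
rewrite -sum_nat_const; apply: eq_bigr => L Lline.
rewrite -(card_large_subsets (line_card4 Lline)) -sum1_card; apply: eq_bigl => Y.
rewrite !inE; apply/andP/andP => [[/andP [Y3 /existsP [L' /andP [L'line YL']]] /eqP <-]|[YL Y3]].
  by rewrite (line_ofE L'line YL') ?YL' // ltnW.
split; last by rewrite (line_ofE Lline YL) // ltnW.
by rewrite Y3; apply/existsP; exists L; rewrite Lline YL.
Qed.
End FourPointLines.
End LinearSpace.

Section AffineGeometry.
Variables (F : finFieldType) (t : nat).
Local Notation point := 'rV[F]_t.
Local Open Scope ring_scope.

Definition affine_line (p q : point) : {set point} := [set p + l *: (q - p) | l : F].

Definition affine_lines : {set {set point}} :=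
  [set affine_line pq.1 pq.2 | pq in [set pq : point * point | pq.1 != pq.2]].

Lemma affine_line_start (p q : point) : p \in affine_line p q.
Proof. by apply/imsetP; exists 0 => //; rewrite scale0r addr0. Qed.

Lemma affine_line_end (p q : point) : q \in affine_line p q.
Proof. by apply/imsetP; exists 1 => //; rewrite scale1r addrC subrK. Qed.

Lemma card_affine_line (p q : point) : p != q -> #|affine_line p q| = #|F|.
Proof.
rewrite eq_sym -subr_eq0 => qp_neq0; rewrite card_imset // => l l' /addrI /eqP.
by rewrite -subr_eq0 -scalerBl scaler_eq0 (negbTE qp_neq0) orbF subr_eq0 => /eqP.
Qed.

(* r + mu (s - r) = p + (a + mu (b - a)) (q - p) for r = p + a (q - p),
   s = p + b (q - p). *)
Lemma affine_line_sub (p q r s : point) :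
  r \in affine_line p q -> s \in affine_line p q -> affine_line r s \subset affine_line p q.
Proof.
move=> /imsetP [a _ ->] /imsetP [b _ ->]; apply/subsetP => _ /imsetP [mu _ ->].
apply/imsetP; exists (a + mu * (b - a)) => //.
by rewrite opprD addrACA subrr add0r -scalerBl scalerA -addrA -scalerDl.
Qed.

(* Any two distinct points of a line span it (both sides have #|F| points). *)
Lemma affine_line_span (p q r s : point) : p != q -> r != s ->
  r \in affine_line p q -> s \in affine_line p q -> affine_line r s = affine_line p q.
Proof.
by move=> pq rs rL sL; apply/eqP; rewrite eqEcard affine_line_sub // !card_affine_line // leqnn.
Qed.

Lemma affine_lines_uniq (L L' : {set point}) (a b : point) :
  L \in affine_lines -> L' \in affine_lines ->
  a \in L -> b \in L -> a \in L' -> b \in L' -> a != b -> L = L'.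
Proof.
move=> /imsetP [[p q] + ->] /imsetP [[p' q'] + ->]; rewrite !inE /= => pq pq' aL bL aL' bL' ab.
by rewrite -(affine_line_span pq ab aL bL) (affine_line_span pq' ab aL' bL').
Qed.

Lemma affine_lines_card (L : {set point}) : L \in affine_lines -> #|L| = #|F|.
Proof. by move=> /imsetP [[p q] + ->]; rewrite inE; apply: card_affine_line. Qed.

Lemma affine_lines_through (a b : point) :
  a != b -> exists2 L, L \in affine_lines & [set a; b] \subset L.
Proof.
move=> ab; exists (affine_line a b); first by apply/imsetP; exists (a, b); rewrite ?inE.
by rewrite subUset !sub1set affine_line_start affine_line_end.
Qed.
End AffineGeometry.

Lemma field_of_order_four : exists F : finFieldType, #|F| = 4.
Proof. by have [F _ card_F] := pPrimePowerField (p := 2) (k := 2) isT isT; exists F. Qed.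

(* The dimension t: the least t with 4^t (4^t - 1) >= 12 k has 4^t <= 64 k. *)
Lemma power_of_four_choice (k : nat) : 1 <= k ->
  exists t, 12 * k <= 4 ^ t * (4 ^ t).-1 /\ 4 ^ t <= 64 * k.
Proof.
move=> k_gt0.
have some_t : exists t, 12 * k <= 4 ^ t * (4 ^ t).-1.
  by exists k.+1; have := ltn_expl k (isT : 1 < 4); rewrite expnS; nia.
case: (ex_minnP some_t) => -[|t] big_t t_min; first by rewrite muln0 in big_t; lia.
exists t.+1; split => //.
have small_t : ~~ (12 * k <= 4 ^ t * (4 ^ t).-1) by apply/negP => /t_min; rewrite ltnn.
by rewrite expnS; move: small_t; have := expn_gt0 4 t; nia.
Qed.

Theorem mainTheorem3 (k : nat) (hk : (1 <= k)%N) :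
  exists m : nat, (m <= 64 * k + 1)%N /\
    ((5%:R / 3%:R) * ('C(m, 2))%:R + ('C(m, 1))%:R + ('C(m, 0))%:R + k%:R
      <= (forb m A_mat)%:R :> rat)%R.
Proof.
have [t [big_t small_t]] := power_of_four_choice hk.
have [F card_F] := field_of_order_four.
pose lines := affine_lines F t.
have line_card4 L : L \in lines -> #|L| = 4 by rewrite -card_F; apply: affine_lines_card.
have line_uniq := @affine_lines_uniq F t.
have card_V : #|{: 'rV[F]_t}| = 4 ^ t by rewrite card_mx card_F mul1n.
exists #|{: 'rV[F]_t}|; split; first by rewrite card_V; lia.
have forb_bound := A_free_le_forb_card (family_A_free line_uniq line_card4).
rewrite card_family (card_sublines line_uniq line_card4) bin0 bin1 in forb_bound.
have pair_count := card_lines line_uniq line_card4 (@affine_lines_through F t).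
have binom2 := mul_bin_diag #|{: 'rV[F]_t}| 1; rewrite bin1 in binom2.
rewrite -card_V in big_t; rewrite bin0 bin1.
move: forb_bound pair_count binom2 big_t.
set m := #|{: 'rV[F]_t}|; set C := 'C(m, 2); set N := forb m A_mat.
(* Naming m (m - 1) makes the remaining arithmetic linear. *)
set pairs := m * m.-1 => forb_bound pair_count binom2 big_t.
have key : 5 * C + 3 * m + 3 + 3 * k <= 3 * N by lia.
have : ((5 * C + 3 * m + 3 + 3 * k)%:R <= (3 * N)%:R :> rat)%R by rewrite ler_nat.
by rewrite !natrD; lra.
Qed.
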